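(* Let $m \ge 1$ and let $S_1 \neq S_2$ be finite nonempty multisets of vectors in $\mathbb{R}^m$ with $|S_1| = |S_2|$. For $p \in (0,1)$ and $i \in \{1,2\}$, let $M_i^{(p)}$ be the random vector obtained by retaining each element of $S_i$ independently with probability $1-p$ (dropping it with probability $p$) and taking the mean of the retained elements (with the convention that the mean of an empty multiset is $0$). Then there exists $p \in (0,1)$ such that $M_1^{(p)}$ and $M_2^{(p)}$ have different distributions; that is, $S_1$ and $S_2$ can be distinguished by a DropGNN with mean neighborhood aggregation.
   Context: In a DropGNN with mean neighborhood aggregation, a node $u$ whose neighbors have the multiset of feature vectors $S$ computes, in each run, the mean of the features of those neighbors that were not dropped; each node is dropped independently with probability $p$ in each run, and the results of many independent runs are aggregated. Two neighbor multisets are distinguishable if the resulting distributions of aggregated values differ. *)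

From HB Require Import structures.
From mathcomp Require Import all_boot all_order all_algebra.
From mathcomp Require Import reals.
Set Implicit Arguments. Unset Strict Implicit. Unset Printing Implicit Defensive.
Import Order.TTheory GRing.Theory Num.Theory.
Local Open Scope ring_scope.

(* A multiset of vectors in R^m is a sequence, considered up to permutation
   (perm_eq).  A "run" of the dropping process is a mask b : bitseq of the same
   length, where true = retained (probability 1-p), false = dropped (prob. p). *)

Definition mask_prob (R : realType) (p : R) (b : seq bool) : R :=
  \prod_(x <- b) (if x then 1 - p else p).

Definition retained_mean (R : realType) (m : nat) (S : seq 'rV[R]_m)
    (b : seq bool) : 'rV[R]_m :=
  let T := mask b S in
  if size T == 0%N then 0 else (size T)%:R^-1 *: \sum_(v <- T) v.

Definition mean_law (R : realType) (m : nat) (p : R) (S : seq 'rV[R]_m)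
    (v : 'rV[R]_m) : R :=
  \sum_(b : (size S).-tuple bool | retained_mean S b == v) mask_prob p b.

From HB Require Import structures.
From mathcomp Require Import all_boot all_order all_algebra.
From mathcomp Require Import reals.
From mathcomp Require Import ring.
Import Order.TTheory GRing.Theory Num.Theory.
Local Open Scope ring_scope.

(* Put 1 - p = p t.  A mask b has probability p^|S| t^(#retained b), so
   mean_law p S v = p^|S| G_{S,v}(t) for the polynomial G_{S,v} that counts the
   masks with retained mean v by their number of retained elements.  The masks
   retaining exactly one element are the one-hot masks, and such a mask has
   mean v exactly when it retains a copy of v; hence the coefficient of X in
   G_{S,v} is the multiplicity of v in S.  If S1 and S2 differ as multisets,
   some v has different multiplicities, so G_{S1,v} - G_{S2,v} is a nonzero
   polynomial; it does not vanish at some t > 0, and p = 1/(1+t) distinguishes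
   the two laws at v. *)

Lemma count_tnth {T : Type} {n} (t : n.-tuple T) (a : pred T) :
  count a t = #|[pred j | a (tnth t j)]|.
Proof.
by rewrite -[in LHS](map_tnth_enum t) count_map enumT cardE /enum_mem size_filter.
Qed.

Section OneHot.
Context {n : nat}.

Definition onehot (i : 'I_n) : n.-tuple bool := [tuple j == i | j < n].

Lemma tnth_onehot (i j : 'I_n) : tnth (onehot i) j = (j == i).
Proof. exact: tnth_mktuple. Qed.

Lemma count_onehot (i : 'I_n) : count id (onehot i) = 1%N.
Proof. by rewrite count_tnth (eq_card (tnth_onehot i)) card1. Qed.

Lemma onehot_inj : injective onehot.
Proof.
by move=> i j /(congr1 (fun b => tnth b i)); rewrite !tnth_onehot eqxx => /esym/eqP.
Qed.

Lemma count_eq1_onehot (b : n.-tuple bool) :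
  count id b = 1%N -> {i | b = onehot i}.
Proof.
rewrite count_tnth => /mem_card1 [i bi]; exists i.
by apply: eq_from_tnth => j; rewrite tnth_onehot; have := bi j; rewrite !inE.
Qed.

Lemma mask_onehot {T : Type} (t : n.-tuple T) (i : 'I_n) :
  mask (onehot i) t = [:: tnth t i].
Proof.
rewrite -[in LHS](map_tnth_enum t) -map_mask [val _]/=.
by rewrite -filter_mask filter_pred1_uniq ?enum_uniq ?mem_enum.
Qed.

End OneHot.

Lemma poly_pos_nonroot {R : numDomainType} {g : {poly R}} :
  g != 0 -> exists2 t : R, 0 < t & ~~ root g t.
Proof.
move=> g_neq0.
have /allPn [_ /mapP [i _ ->] gi] :
    ~~ all (root g) [seq i.+1%:R : R | i <- iota 0 (size g)].
  apply/negP => all_roots.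
  have rs_uniq : uniq [seq i.+1%:R : R | i <- iota 0 (size g)].
    by rewrite map_inj_uniq ?iota_uniq // => i j /eqP; rewrite eqr_nat eqSS => /eqP.
  by have := max_poly_roots g_neq0 all_roots rs_uniq; rewrite size_map size_iota ltnn.
by exists i.+1%:R; rewrite ?ltr0Sn.
Qed.

Section MeanLawPolynomial.
Context {R : realType} {m : nat}.
Implicit Types (S : seq 'rV[R]_m) (v : 'rV[R]_m).

Definition mean_law_poly S v : {poly R} :=
  \sum_(b : (size S).-tuple bool | retained_mean S b == v) 'X^(count id b).

Lemma mask_probE {p t : R} (b : seq bool) :
  1 - p = p * t -> mask_prob p b = p ^+ size b * t ^+ count id b.
Proof.
move=> e; rewrite /mask_prob; elim: b => [|[] b IH]; first by rewrite big_nil mulr1.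
all: by rewrite big_cons IH /= ?e !exprS; ring.
Qed.

Lemma mean_law_horner {p t : R} S v :
  1 - p = p * t -> mean_law p S v = p ^+ size S * (mean_law_poly S v).[t].
Proof.
move=> e; rewrite /mean_law /mean_law_poly horner_sum mulr_sumr.
by apply: eq_bigr => b _; rewrite (mask_probE b e) hornerXn size_tuple.
Qed.

Lemma retained_mean_onehot S (i : 'I_(size S)) :
  retained_mean S (onehot i) = tnth (in_tuple S) i.
Proof.
by rewrite /retained_mean (mask_onehot (in_tuple S) i) /= invr1 scale1r big_seq1.
Qed.

Lemma coef1_mean_law_poly S v : (mean_law_poly S v)`_1 = (count_mem v S)%:R.
Proof.
rewrite coef_sum; under eq_bigr do rewrite coefXn.
rewrite -natr_sum; congr _%:R.
rewrite -big_mkcondr sum_nat_cond_const muln1.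
have -> : [set b : (size S).-tuple bool |
             (retained_mean S b == v) && (1 == count id b)] =
          onehot @: [set i | tnth (in_tuple S) i == v].
  apply/setP => b; rewrite inE; apply/andP/imsetP.
  - move=> [/eqP <- /eqP/esym/count_eq1_onehot [i ->]].
    by exists i; rewrite // inE retained_mean_onehot.
  - by move=> [i + ->]; rewrite inE retained_mean_onehot count_onehot => ->.
by rewrite card_imset; [rewrite cardsE (count_tnth (in_tuple S)) | exact: onehot_inj].
Qed.

End MeanLawPolynomial.

Theorem lemma1 (R : realType) (m : nat) (S1 S2 : seq 'rV[R]_m) :
  (0 < m)%N ->
  (0 < size S1)%N ->
  size S1 = size S2 ->
  ~~ perm_eq S1 S2 ->
  exists p : R, 0 < p < 1 /\
    exists v : 'rV[R]_m, mean_law p S1 v != mean_law p S2 v.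
Proof.
move=> _ _ eq_size /allPn [v _ count_v].
pose g := mean_law_poly S1 v - mean_law_poly S2 v.
have g_neq0 : g != 0.
  apply: contraNneq count_v => /(congr1 (fun q : {poly R} => q`_1)).
  by rewrite coefB coef0 !coef1_mean_law_poly => /eqP; rewrite subr_eq0 eqr_nat.
have [t t_gt0 g_t] := poly_pos_nonroot g_neq0.
have t1_gt0 : 0 < 1 + t by rewrite addr_gt0.
pose p := (1 + t)^-1.
have e : 1 - p = p * t by rewrite /p; field; rewrite gt_eqF.
exists p; split.
  by rewrite invr_gt0 t1_gt0 invf_lt1 // ltrDl.
exists v; rewrite -subr_eq0 !(mean_law_horner _ _ e) -eq_size.
rewrite -mulrBr -hornerN -hornerD.
by rewrite mulf_neq0 // expf_neq0 // invr_eq0 gt_eqF.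
Qed.
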